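(* Let $G$ be of type $A_{n-1}$, let $1\le s,r\le n-1$ and $p=\lfloor rs/n\rfloor$. Then $$w_{s,r}=(s_s s_{s-1}\cdots s_{p+1})(s_{s+1}s_s\cdots s_{p+2})\cdots(s_{s+r-p-1}\cdots s_{r+1}s_r),$$ i.e. $w_{s,r}=\prod_{j=p+1}^{r}(s_{s+j-p-1}s_{s+j-p-2}\cdots s_j)$ with the factors ordered by increasing $j$.
   Context: $G$ is the simple adjoint group of type $A_{n-1}$ (i.e. $PSL(n,\mathbb{C})$) with maximal torus $T$, Borel $B\supseteq T$, simple roots $\alpha_1,\dots,\alpha_{n-1}$ in the standard numbering, simple reflections $s_i$, fundamental weights $\omega_i$ (all minuscule); $\lambda_s$ is the one-parameter subgroup of $T$ with $\langle\alpha_j,\lambda_s\rangle=\delta_{sj}$. $P=P_{S\setminus\{\alpha_r\}}$, $W^{S\setminus\{\alpha_r\}}$ the minimal coset representatives of $W/W_{S\setminus\{\alpha_r\}}$ with the Bruhat order. $w_{s,r}$ is the unique Bruhat-minimal element $w\in W^{S\setminus\{\alpha_r\}}$ with $\langle w(\omega_r),\lambda_s\rangle\le0$ (equivalently, such that the Schubert variety $X(w)=\overline{BwP/P}$ has a point at which some $\lambda_s(\mathbb{G}_m)$-invariant section of a positive power of $\mathcal{L}(m\omega_r)$ is nonzero, $m$ least with $m\omega_r$ in the root lattice). *)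

From HB Require Import structures.
From mathcomp Require Import all_boot all_order all_algebra fingroup perm.
Import GRing.Theory Num.Theory.

(* Weyl group W of type A_{n-1} = 'S_n, acting on weights (vectors in Q^n,
   i.e. functions 'I_n -> rat) by  (w . mu)_i = mu (w i).  With mathcomp's
   perm product ((x*y) i = y (x i)) this is a LEFT action:
   wact (x * y) = wact x \o wact y, so the group product x * y of 'S_n is the
   product  x y  in the Weyl group. *)
Definition wact (n : nat) (w : 'S_n) (mu : 'I_n -> rat) : 'I_n -> rat :=
  fun i => mu (w i).

(* simple reflection s_i (1 <= i <= n-1), swapping coordinates i-1 and i
   (0-based), i.e. the reflection in alpha_i = e_i - e_{i+1} (1-based).
   Out-of-range indices give the identity (never used). *)
Definition sref (n i : nat) : 'S_n :=
  match (insub i.-1 : option 'I_n), (insub i : option 'I_n) with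
  | Some a, Some b => if (0 < i)%N then tperm a b else 1%g
  | _, _ => 1%g
  end.

Definition simple_word (n : nat) (ws : seq nat) : bool :=
  all (fun i => (0 < i < n)%N) ws.

Definition word_prod (n : nat) (ws : seq nat) : 'S_n :=
  (\prod_(i <- ws) sref n i)%g.

Definition is_length (n : nat) (w : 'S_n) (k : nat) : Prop :=
  (exists ws, simple_word n ws /\ size ws = k /\ word_prod n ws = w) /\
  (forall ws, simple_word n ws -> word_prod n ws = w -> (k <= size ws)%N).

Definition is_reflection (n : nat) (t : 'S_n) : Prop :=
  exists (x : 'S_n) (i : nat), (0 < i < n)%N /\ t = ((sref n i) ^ x)%g.

Inductive bruhat_le (n : nat) (u : 'S_n) : 'S_n -> Prop :=
| bruhat_refl : bruhat_le n u u
| bruhat_step (x t : 'S_n) (k1 k2 : nat) :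
    bruhat_le n u x -> is_reflection n t -> is_length n x k1 ->
    is_length n (x * t)%g k2 -> (k1 < k2)%N -> bruhat_le n u (x * t)%g.

Definition WJ (n r : nat) : {set 'S_n} :=
  <<[set sref n (nat_of_ord j) | j : 'I_n & (0 < j)%N && (nat_of_ord j != r)]>>%g.

Definition min_coset_rep (n r : nat) (w : 'S_n) : Prop :=
  forall v, v \in WJ n r -> forall k1 k2,
    is_length n w k1 -> is_length n (w * v)%g k2 -> (k1 <= k2)%N.

Local Open Scope ring_scope.

Definition fund_weight (n r : nat) : 'I_n -> rat :=
  fun i => (if (nat_of_ord i < r)%N then 1 else 0) - r%:R / n%:R.

(* one-parameter subgroup lambda_s (fundamental coweight), as an element of
   the dual, realized via the standard pairing: <alpha_j, lambda_s> = delta_sj *)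
Definition lambda_cw (n s : nat) : 'I_n -> rat :=
  fun i => (if (nat_of_ord i < s)%N then 1 else 0) - s%:R / n%:R.

Definition pairing (n : nat) (mu lam : 'I_n -> rat) : rat :=
  \sum_(i < n) mu i * lam i.

Definition wsr_cond (n s r : nat) (w : 'S_n) : Prop :=
  pairing n (wact n w (fund_weight n r)) (lambda_cw n s) <= 0.

Definition is_min_wsr (n s r : nat) (w : 'S_n) : Prop :=
  min_coset_rep n r w /\ wsr_cond n s r w /\
  forall v, min_coset_rep n r v -> wsr_cond n s r v -> bruhat_le n v w -> v = w.

From mathcomp Require Import all_boot all_order all_algebra fingroup perm.
From mathcomp Require Import zify ring.

(* Positions are 0-based and w acts on weights by (w mu)_i = mu (w i), so
   w(omega_r) only depends on the set A(w) = {i | w i < r} of positions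
   carrying a value < r (lowpos r w).  The minimal representatives of the
   cosets w W_J, J = S \ {alpha_r}, are the w increasing on A(w) and on its
   complement; they are determined by A(w), and their length is their number
   of inversions.  Since <w(omega_r), lambda_s> = |A(w) /\ [0,s)| - rs/n, the
   admissible w are those with overlap s r w := |A(w) /\ [0,s)| <= p.  Moving
   an element of A(w) one place to the left is a Bruhat cover below w, and the
   only admissible A in which no such move keeps admissibility is
   [0,p) \/ [s, s+r-p).  Hence the representative w0 with this set lies below
   every admissible w.  Finally the factor s_(s+j-p-1) ... s_j of the product
   carries position j-1 of A up to s+j-p-1, so the factors for
   j = r, ..., p+1 turn [0,r) into [0,p) \/ [s, s+r-p). *)

Set Implicit Arguments.
Unset Strict Implicit.
Unset Printing Implicit Defensive.

Import GRing.Theory Num.Theory.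

Lemma sum_prefix_count (a : pred nat) m n : m <= n ->
  \sum_(i < n) ((i < m) && a i) = count a (iota 0 m).
Proof.
move=> le_mn; have -> : iota 0 m = index_iota 0 m by rewrite /index_iota subn0.
rewrite -sum1_count big_mkord (big_ord_widen_cond n _ (fun _ => 1) le_mn).
by rewrite [RHS]big_mkcond /=; apply: eq_bigr => i _; rewrite andbC; case: (_ && _).
Qed.

Lemma sum_ord_ltn m n : m <= n -> \sum_(i < n) (i < m) = m.
Proof.
move=> le_mn; under eq_bigr => i _ do rewrite -[_ < m]andbT.
by rewrite (sum_prefix_count predT le_mn) count_predT size_iota.
Qed.

Lemma nonincreasing_count (a : pred nat) lo k :
  (forall e, lo <= e -> e.+1 < lo + k -> a e.+1 -> a e) ->
  forall x, lo <= x < lo + k -> a x = (x < lo + count a (iota lo k)).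
Proof.
elim: k lo => [|k IH] lo mono x hx /=; first by lia.
have IH' := IH lo.+1 (fun e h1 h2 => mono e (ltnW h1) ltac:(lia)).
case: (boolP (a lo)) => alo.
  have [-> | ne_xlo] := eqVneq x lo; first by rewrite alo; lia.
  by rewrite IH'; [apply/idP/idP; lia | lia].
have c0 : count a (iota lo.+1 k) = 0.
  apply/eqP; apply: contraNT alo; rewrite -lt0n => c_gt0.
  have k_gt0 : 0 < k by have := count_size a (iota lo.+1 k); rewrite size_iota; lia.
  by apply: mono => //; [lia | rewrite IH'; lia].
have [-> | ne_xlo] := eqVneq x lo; first by rewrite (negbTE alo) c0; lia.
by rewrite IH' ?c0; [apply/idP/idP; lia | lia].
Qed.

Lemma two_block_shape (a : pred nat) n s r p :
  0 < s < n -> p <= s -> p <= r ->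
  count a (iota 0 n) = r -> count a (iota 0 s) <= p ->
  (forall e, e.+1 < n -> ~~ a e -> a e.+1 -> e.+1 = s /\ count a (iota 0 s) = p) ->
  forall x, x < n -> a x = (x < p) || (s <= x < s + r - p).
Proof.
move=> s_bd le_ps le_pr cnt_n cnt_s ascent.
set c := count a (iota 0 s) in cnt_s ascent.
have cnt_tail : count a (iota s (n - s)) = r - c.
  have le_sn : s <= n by lia.
  by move: cnt_n; rewrite -{1}(subnKC le_sn) iotaD count_cat add0n; lia.
have no_ascent e : e.+1 != s -> e.+1 < n -> a e.+1 -> a e.
  by move=> ne_s lt_n ae1; apply/negPn/negP => nae; have [] := ascent e lt_n nae ae1; lia.
have head x : x < s -> a x = (x < c).
  move=> lt_xs; apply: (@nonincreasing_count a 0 s); last by lia.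
  by move=> e _ lt_e; apply: no_ascent; lia.
have tail x : s <= x < n -> a x = (x < s + (r - c)).
  move=> x_bd; rewrite -cnt_tail; apply: nonincreasing_count; last by lia.
  by move=> e le_se lt_e; apply: no_ascent; lia.
have c_eq : c = p.
  apply/eqP; rewrite eqn_leq cnt_s leqNgt; apply/negP => lt_cp.
  have [_ c_p] : s.-1.+1 = s /\ c = p.
    by apply: ascent; [lia | rewrite head; lia | rewrite prednK ?tail; lia].
  by rewrite c_p ltnn in lt_cp.
by move=> x lt_xn; case: (ltnP x s) => x_s; [rewrite head | rewrite tail]; lia.
Qed.

(** * Inversions, length and Bruhat order *)

Section Permutations.

Variable n : nat.
Implicit Types (u v w : 'S_n) (i j a b : 'I_n).

Lemma sref_tperm i j : j = i.+1 :> nat -> sref n j = tperm i j.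
Proof.
move=> ji; rewrite /sref ji /= valK.
by have -> : (insub i.+1 : option 'I_n) = Some j by rewrite -ji valK.
Qed.

Lemma sref_out k : ~~ (0 < k < n) -> sref n k = 1%g.
Proof.
move=> k_out; rewrite /sref; case: insubP => [? _ _|//]; case: insubP => [b _ bk|//].
by case: ifP => // k_gt0; move: k_out; rewrite k_gt0 -bk ltn_ord.
Qed.

Lemma sref_adjacent k : 0 < k < n ->
  exists i j, [/\ j = i.+1 :> nat, j = k :> nat & sref n k = tperm i j].
Proof.
case/andP=> k_gt0 lt_kn; have lt_k1n : k.-1 < n by lia.
exists (Ordinal lt_k1n), (Ordinal lt_kn); split=> //=; first by lia.
by apply: (@sref_tperm (Ordinal lt_k1n) (Ordinal lt_kn)) => /=; lia.
Qed.

Lemma adj_eqF i j : j = i.+1 :> nat -> (i == j) = false.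
Proof. by move=> ji; apply/negbTE; rewrite -val_eqE /= ji; lia. Qed.

Lemma ltn_tperm_adj i j a b : j = i.+1 :> nat ->
  (a, b) != (i, j) -> (a, b) != (j, i) -> (tperm i j a < tperm i j b) = (a < b).
Proof.
move=> ji; have val_neq (c d : 'I_n) : c <> d -> c <> d :> nat by move=> ne /ord_inj.
rewrite !xpair_eqE.
case: tpermP => [->|->|/val_neq ai /val_neq aj];
  case: tpermP => [->|->|/val_neq bi /val_neq bj]; rewrite -!val_eqE /= ?ji; lia.
Qed.

Definition inversions w := \sum_(a < n) \sum_(b < n) ((a < b) && (w b < w a)).

Lemma inversions1 : inversions 1 = 0.
Proof.
by rewrite /inversions big1 // => a _; rewrite big1 // => b _; rewrite !perm1; case: ltngtP.
Qed.

Lemma inversionsV w : inversions w^-1 = inversions w.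
Proof.
rewrite /inversions (reindex_inj (@perm_inj _ w)).
under eq_bigr => a _ do rewrite (reindex_inj (@perm_inj _ w)).
rewrite exchange_big /=.
by apply: eq_bigr => b _; apply: eq_bigr => a _; rewrite !permK andbC.
Qed.

Lemma inversions_tperm_asc i j w : j = i.+1 :> nat -> w i < w j ->
  inversions (tperm i j * w) = (inversions w).+1.
Proof.
move=> ji asc; rewrite /inversions (reindex_inj (@perm_inj _ (tperm i j))).
under eq_bigr => a _ do rewrite (reindex_inj (@perm_inj _ (tperm i j))).
(* after reindexing by the swap, only the pair (j, i) changes status *)
have term a b : ((tperm i j a < tperm i j b) && ((tperm i j * w)%g (tperm i j b) <
                   (tperm i j * w)%g (tperm i j a)) : nat)
              = ((a < b) && (w b < w a)) + ((a == j) && (b == i)).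
  rewrite !permM !tpermK.
  have [[-> ->] | ne_ij] := eqVneq (a, b) (i, j).
    by rewrite tpermL tpermR adj_eqF // [w j < w i]ltnNge (ltnW asc) !andbF.
  have [E | ne_ji] := eqVneq (a, b) (j, i).
    case: E => -> ->.
    by rewrite tpermL tpermR asc !eqxx ji ltnSn ltnNge leqnSn.
  rewrite ltn_tperm_adj //; move: ne_ji; rewrite xpair_eqE => /negbTE ->.
  by rewrite addn0.
under eq_bigr => a _ do under eq_bigr => b _ do rewrite term.
rewrite -addn1; under eq_bigr => a _ do rewrite big_split /=.
rewrite big_split /=; congr (_ + _).
transitivity (\sum_(a < n) (a == j : nat)).
  apply: eq_bigr => a _; rewrite (bigD1 i) //= eqxx andbT big1 ?addn0 // => b ne_bi.
  by rewrite (negbTE ne_bi) andbF.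
by rewrite (bigD1 j) //= eqxx big1 // => a /negbTE ->.
Qed.

Lemma inversions_tperm_desc i j w : j = i.+1 :> nat -> w j < w i ->
  inversions w = (inversions (tperm i j * w)).+1.
Proof.
move=> ji desc; rewrite -(inversions_tperm_asc ji) ?mulgA ?tperm2 ?mul1g //.
by rewrite !permM tpermL tpermR.
Qed.

Lemma inversions_sref_le k w : 0 < k < n -> inversions (sref n k * w) <= (inversions w).+1.
Proof.
case/sref_adjacent=> i [j [ji _ ->]].
have [asc | desc | eq_ij] := ltngtP (w i) (w j).
- by rewrite inversions_tperm_asc.
- by rewrite [in X in _ <= X](inversions_tperm_desc ji desc) leqW.
- by move/val_inj/perm_inj: eq_ij ji => ->; lia.
Qed.

Lemma inversions_word_prod ws : simple_word n ws -> inversions (word_prod n ws) <= size ws.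
Proof.
elim: ws => [|k ws IH] /=; first by rewrite /word_prod big_nil inversions1.
case/andP=> k_bd /IH le_ws; rewrite /word_prod big_cons.
by apply: leq_trans (inversions_sref_le _ k_bd) _.
Qed.

(* w^-1 has at most one descent, at r *)
Definition grassmannian r w :=
  forall i j, i < j -> (w i < r) = (w j < r) -> w i < w j.

Lemma grassmannian1 r : grassmannian r 1.
Proof. by move=> i j lt_ij _; rewrite !perm1. Qed.

Lemma grassmannian_uniq r u w : grassmannian r u -> grassmannian r w ->
  (forall i, (u i < r) = (w i < r)) -> u = w.
Proof.
move=> gr_u gr_w same_blocks.
suff le_uw u' w' : grassmannian r u' -> grassmannian r w' ->
    (forall i, (u' i < r) = (w' i < r)) -> forall i, u' i <= w' i.
  by apply/permP => i; apply/val_inj/eqP; rewrite eqn_leq !le_uw.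
move=> gr_u' gr_w' blocks' i; have [m] := ubnP i; elim: m i => // m IH i lt_im.
rewrite leqNgt; apply/negP => lt_wu.
set a := (u'^-1)%g (w' i); have ua : u' a = w' i by rewrite /a permKV.
have block_a : (u' a < r) = (u' i < r) by rewrite ua -blocks'.
have lt_ai : a < i.
  case: ltngtP => // [lt_ia | /val_inj eq_ai].
    by have := gr_u' _ _ lt_ia (esym block_a); rewrite ua; lia.
  by move: lt_wu; rewrite -ua eq_ai ltnn.
have := IH a (leq_trans lt_ai lt_im).
have := gr_w' a i lt_ai; rewrite -!blocks' block_a ua; lia.
Qed.

Lemma blockwise_increasing r (g : 'S_n) :
  (forall i j, j = i.+1 :> nat -> j != r :> nat -> g i < g j) ->
  forall i j, i < j -> (i < r) = (j < r) -> g i < g j.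
Proof.
move=> adj_incr i j lt_ij; have [d] := ubnP (j - i); elim: d i j lt_ij => // d IH i j lt_ij.
have [ji | ne_j] := eqVneq (j : nat) i.+1.
  by move=> _ same; apply: adj_incr => //; apply/eqP => jr; move: same; rewrite -jr; lia.
have lt_i1n : i.+1 < n by have := ltn_ord j; lia.
move=> lt_d same; apply: (@ltn_trans (g (Ordinal lt_i1n))).
  by apply: adj_incr => //=; apply/eqP => i1r; move: same; lia.
by apply: IH => //=; lia.
Qed.

Lemma increasing_perm_eq1 w : (forall i j, j = i.+1 :> nat -> w i < w j) -> w = 1%g.
Proof.
move=> asc; apply: (@grassmannian_uniq n); last by move=> i; rewrite perm1 !ltn_ord.
  move=> i j lt_ij _; apply: (@blockwise_increasing n) => //; last by rewrite !ltn_ord.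
  by move=> a b ba _; apply: asc.
exact: grassmannian1.
Qed.

Lemma reduced_word w :
  exists2 ws, simple_word n ws & size ws = inversions w /\ word_prod n ws = w.
Proof.
have [m] := ubnP (inversions w); elim: m w => // m IH w lt_wm.
case: (boolP [exists i : 'I_n, exists j : 'I_n, (j == i.+1 :> nat) && (w j < w i)]).
  case/existsP=> i /existsP [j /andP [/eqP ji desc]].
  have inv_w := inversions_tperm_desc ji desc.
  have [ws simple_ws [size_ws prod_ws]] := IH (tperm i j * w)%g ltac:(lia).
  exists (val j :: ws); first by rewrite /= simple_ws ltn_ord andbT ji.
  rewrite /= size_ws inv_w /word_prod big_cons -/(word_prod n ws) prod_ws.
  by rewrite (sref_tperm ji) mulgA tperm2 mul1g.
move=> no_desc; exists [::] => //.
suff -> : w = 1%g by rewrite inversions1 /word_prod big_nil.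
apply: increasing_perm_eq1 => i j ji.
have [//| desc | /val_inj/perm_inj eq_ij] := ltngtP (w i) (w j).
  by move/existsPn/(_ i)/existsPn/(_ j): no_desc; rewrite ji eqxx desc.
by move: ji; rewrite eq_ij; lia.
Qed.

Lemma is_length_inversions w : is_length n w (inversions w).
Proof.
split; first by have [ws ? []] := reduced_word w; exists ws.
by move=> ws /inversions_word_prod + <-.
Qed.

Lemma is_length_eq_inversions w k : is_length n w k -> k = inversions w.
Proof.
case=> -[ws [simple_ws [<- <-]]] minimal.
have [ws' simple_ws' [size_ws' prod_ws']] := reduced_word (word_prod n ws).
apply/eqP; rewrite eqn_leq inversions_word_prod // andbT -size_ws'.
exact: minimal.
Qed.

Lemma bruhat_le_inversions u w :
  bruhat_le n u w -> u = w \/ inversions u < inversions w.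
Proof.
elim=> [|x t k1 k2 _ IH _ len_x len_xt lt_k]; first by left.
move: lt_k; rewrite (is_length_eq_inversions len_x) (is_length_eq_inversions len_xt).
by right; case: IH => [->|]; lia.
Qed.

Lemma bruhat_anti u w : bruhat_le n u w -> bruhat_le n w u -> u = w.
Proof. by move=> /bruhat_le_inversions [//|lt_uw] /bruhat_le_inversions [->//|]; lia. Qed.

Lemma bruhat_le_tperm u (x : 'S_n) i j : j = i.+1 :> nat -> x i < x j ->
  bruhat_le n u x -> bruhat_le n u (tperm i j * x).
Proof.
move=> ji asc le_ux.
have tx : (tperm i j * x = x * sref n j ^ x)%g.
  by rewrite (sref_tperm ji) conjgE !mulgA mulgV mul1g.
rewrite tx; apply: bruhat_step le_ux _ (is_length_inversions _) (is_length_inversions _) _.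
  by exists x, j; rewrite ltn_ord andbT ji.
by rewrite -tx (inversions_tperm_asc ji asc).
Qed.

(** * Minimal coset representatives *)

Lemma sref_ltn_stable (r k : nat) a : k != r -> (sref n k a < r) = (a < r).
Proof.
move=> ne_kr; have [k_bd | k_out] := boolP (0 < k < n); last by rewrite sref_out // perm1.
have [i [j [ji jk ->]]] := sref_adjacent k_bd.
by move: ne_kr; rewrite -jk; case: tpermP => [->|->|//]; rewrite ji; lia.
Qed.

Lemma WJ_ltn_stable r v a : v \in WJ n r -> (v a < r) = (a < r).
Proof.
set H := [set v : 'S_n | [forall a, (v a < r) == (a < r)]].
have group_H : group_set H.
  apply/group_setP; split; first by rewrite inE; apply/forallP => b; rewrite perm1.
  move=> u u'; rewrite !inE => /forallP stable_u /forallP stable_u'.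
  by apply/forallP => b; rewrite permM (eqP (stable_u' _)) (eqP (stable_u _)).
have /subsetP WJ_H : WJ n r \subset H.
  rewrite /WJ (gen_subG _ (Group group_H)); apply/subsetP => u /imsetP [k].
  by rewrite inE => /andP [_ ne_kr] ->; rewrite inE; apply/forallP => b; rewrite sref_ltn_stable.
by move=> /WJ_H; rewrite inE => /forallP /(_ a) /eqP.
Qed.

Lemma grassmannian_min_coset_rep r w : grassmannian r w -> min_coset_rep n r w.
Proof.
move=> gr_w v v_WJ k1 k2 /is_length_eq_inversions -> /is_length_eq_inversions ->.
apply: leq_sum => a _; apply: leq_sum => b _.
case: (boolP ((a < b) && (w b < w a))) => //= /andP [lt_ab desc].
have cross : (w a < r) != (w b < r) by apply/negP => /eqP /(gr_w a b lt_ab); lia.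
have := WJ_ltn_stable (w a) v_WJ; have := WJ_ltn_stable (w b) v_WJ.
by rewrite !permM lt_ab; lia.
Qed.

Lemma min_coset_rep_grassmannian r w : min_coset_rep n r w -> grassmannian r w.
Proof.
move=> min_w.
have adj i j : j = i.+1 :> nat -> j != r :> nat -> (w^-1)%g i < (w^-1)%g j.
  move=> ji ne_jr; have sj_WJ : sref n j \in WJ n r.
    by apply: mem_gen; apply/imsetP; exists j; rewrite // inE ne_jr andbT ji.
  have := min_w _ sj_WJ _ _ (is_length_inversions w) (is_length_inversions _).
  rewrite -(inversionsV (w * _)) invMg (sref_tperm ji) tpermV -(inversionsV w).
  have [//| desc | /val_inj/perm_inj eq_ij] := ltngtP ((w^-1)%g i) ((w^-1)%g j).
    by rewrite [in X in X <= _](inversions_tperm_desc ji desc) ltnn.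
  by move: ji; rewrite eq_ij; lia.
move=> i j lt_ij same; have [//| desc | /val_inj/perm_inj eq_ij] := ltngtP (w i) (w j).
  by have := blockwise_increasing adj desc (esym same); rewrite !permK; lia.
by move: lt_ij; rewrite eq_ij ltnn.
Qed.

Lemma min_coset_repP r w : min_coset_rep n r w <-> grassmannian r w.
Proof. by split; [apply: min_coset_rep_grassmannian | apply: grassmannian_min_coset_rep]. Qed.

(** * Moving positions of small values *)

Definition lowpos r w : pred nat :=
  fun k => if insub k is Some i then w i < r else false.

Lemma lowposE r w i : lowpos r w i = (w i < r).
Proof. by rewrite /lowpos valK. Qed.

Lemma lowpos_out r w x : n <= x -> lowpos r w x = false.
Proof. by move=> le_nx; rewrite /lowpos insubN // -leqNgt. Qed.

Lemma lowpos1 r x : r <= n -> lowpos r 1%g x = (x < r).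
Proof.
move=> le_rn; case: (ltnP x n) => [lt_xn | le_nx]; last by rewrite lowpos_out //; lia.
by rewrite -[x]/(val (Ordinal lt_xn)) lowposE perm1.
Qed.

Lemma lowpos_tperm r i j w x : j = i.+1 :> nat ->
  lowpos r (tperm i j * w) x =
    if x == i then w j < r else if x == j then w i < r else lowpos r w x.
Proof.
move=> ji; case: (ltnP x n) => [lt_xn | le_nx]; last first.
  rewrite !lowpos_out //; have := ltn_ord i; have := ltn_ord j.
  by case: eqP => [xi|_]; [|case: eqP => [xj|//]]; lia.
rewrite -[x]/(val (Ordinal lt_xn)) !lowposE permM !val_eqE.
by case: tpermP => [->|->|/eqP/negbTE -> /eqP/negbTE ->]; rewrite ?eqxx // eq_sym adj_eqF.
Qed.

Lemma sum_perm_ltn w r : r <= n -> \sum_(i < n) (w i < r) = r.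
Proof.
move=> le_rn; rewrite (reindex_inj (@perm_inj _ (w^-1)%g)).
by under eq_bigr => i _ do rewrite permKV; apply: sum_ord_ltn.
Qed.

Lemma count_lowpos r w : r <= n -> count (lowpos r w) (iota 0 n) = r.
Proof.
move=> le_rn; rewrite -(sum_prefix_count _ (leqnn n)) -[RHS](sum_perm_ltn w le_rn).
by apply: eq_bigr => i _; rewrite ltn_ord lowposE.
Qed.

Lemma grassmannian_tperm r i j w : j = i.+1 :> nat -> (w i < r) != (w j < r) ->
  grassmannian r w -> grassmannian r (tperm i j * w).
Proof.
move=> ji cross gr_w a b lt_ab; rewrite !permM => same; apply: gr_w (same).
rewrite ltn_tperm_adj // xpair_eqE; apply/negP => /andP [/eqP eq_a /eqP eq_b].
  by move: same cross; rewrite eq_a eq_b tpermL tpermR => ->; rewrite eqxx.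
by move: lt_ab; rewrite eq_a eq_b ji; lia.
Qed.

Definition overlap s r w := \sum_(i < n) ((i < s) && (w i < r)).

Lemma overlapE s r w : s <= n -> overlap s r w = count (lowpos r w) (iota 0 s).
Proof.
by move=> le_sn; rewrite -(sum_prefix_count _ le_sn); apply: eq_bigr => i _; rewrite lowposE.
Qed.

Lemma overlap_tperm s r i j w : j = i.+1 :> nat -> w j < r <= w i ->
  overlap s r (tperm i j * w) <= overlap s r w + (j == s :> nat).
Proof.
move=> ji /andP [lo_j hi_i]; rewrite /overlap (reindex_inj (@perm_inj _ (tperm i j))).
have -> : ((j == s :> nat) : nat) = \sum_(a < n) ((a == j) && (j == s :> nat)).
  by rewrite (bigD1 j) //= eqxx big1 ?addn0 // => a /negbTE ->.
rewrite -big_split /=; apply: leq_sum => a _; rewrite permM tpermK.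
case: tpermP => [->|->|_ /eqP/negbTE ->]; last by rewrite addn0.
  by rewrite [w i < r]ltnNge hi_i andbF.
by rewrite eqxx lo_j ji !andbT; case: eqP; lia.
Qed.

Definition bubble (m d : nat) : 'S_n := \prod_(0 <= k < d) sref n (m + d - k).

Lemma bubble_lowpos r (m d : nat) w : m + d < n -> grassmannian r w -> lowpos r w m ->
    (forall x, m < x <= m + d -> ~~ lowpos r w x) ->
  grassmannian r (bubble m d * w) /\
  lowpos r (bubble m d * w) =1 [pred x | lowpos r w x && (x != m) || (x == m + d)].
Proof.
move=> + gr_w lo_m; elim: d => [|d IH] lt_n hi_after.
  rewrite /bubble big_geq // mul1g addn0; split=> // x /=.
  by case: eqVneq => [->|]; lia.
have [gr_d lo_d] := IH ltac:(lia) (fun x x_bd => hi_after x ltac:(lia)).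
have hi_top : lowpos r w (m + d.+1) = false by apply/negbTE/hi_after; lia.
have hi_d : 0 < d -> lowpos r w (m + d) = false by move=> d_pos; apply/negbTE/hi_after; lia.
have lt_i : m + d < n by lia.
have ji : Ordinal lt_n = (Ordinal lt_i).+1 :> nat by rewrite /= addnS.
have -> : bubble m d.+1 = (sref n (m + d.+1) * bubble m d)%g.
  rewrite /bubble big_nat_recl //= subn0; congr (_ * _)%g.
  by apply: eq_big_nat => k _; rewrite addnS subSS.
rewrite -[m + d.+1]/(val (Ordinal lt_n)) (sref_tperm ji) -mulgA; split.
  by apply: grassmannian_tperm => //; rewrite -!lowposE !lo_d /=; lia.
move=> x; rewrite lowpos_tperm // -!lowposE /= !lo_d /=.
by case: ifP => [/eqP ->|/eqP ne_i]; [|case: ifP => [/eqP ->|/eqP ne_j]]; lia.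
Qed.

Lemma bubbles_lowpos r d m : r + d <= n -> m <= r ->
  let w := (\prod_(m.+1 <= j < r.+1) bubble j.-1 d)%g in
  grassmannian r w /\ forall x, lowpos r w x = (x < m) || (m + d <= x < r + d).
Proof.
move=> le_n le_mr; rewrite -(subKn le_mr); move: (r - m) (leq_subr m r) => k.
elim: k => [|k IH] le_kr /=.
  rewrite subn0 big_geq //; split=> [|x]; first exact: grassmannian1.
  by rewrite lowpos1; lia.
have [gr lo] := IH (ltnW le_kr); set m' := r - k.+1 in gr lo *.
have E : r - k = m'.+1 by rewrite /m'; lia.
rewrite E in gr lo; rewrite big_ltn /=; last by rewrite /m'; lia.
set w := (\prod_(m'.+2 <= j < r.+1) bubble j.-1 d)%g in gr lo *.
have lo_m' : lowpos r w m' by rewrite lo; lia.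
have hi_after x : m' < x <= m' + d -> ~~ lowpos r w x by rewrite lo; lia.
have [|gr' lo'] := bubble_lowpos _ gr lo_m' hi_after; first by rewrite /m'; lia.
by split=> // x; rewrite lo' /= lo; lia.
Qed.

Lemma grassmannian_bruhat_ge s r p w0 : 0 < s < n -> p <= s -> p <= r -> r <= n ->
    grassmannian r w0 -> (forall x, lowpos r w0 x = (x < p) || (s <= x < s + r - p)) ->
  forall w, grassmannian r w -> overlap s r w <= p -> bruhat_le n w0 w.
Proof.
move=> s_bd le_ps le_pr le_rn gr_w0 lo_w0 w; have [m] := ubnP (inversions w).
elim: m w => // m IH w lt_wm gr_w ov_w.
case: (boolP [exists i : 'I_n, exists j : 'I_n, [&& j == i.+1 :> nat, w j < r <= w i &
                                             (j != s :> nat) || (overlap s r w < p)]]).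
  case/existsP=> i /existsP [j /and3P [/eqP ji cross allowed]].
  set w' := (tperm i j * w)%g; have w_eq : w = (tperm i j * w')%g.
    by rewrite /w' mulgA tperm2 mul1g.
  have asc' : w' i < w' j by rewrite /w' !permM tpermL tpermR; case/andP: cross; apply: leq_trans.
  have lt_w'm : inversions w' < m.
    by rewrite {1}w_eq (inversions_tperm_asc ji asc') in lt_wm.
  have gr_w' : grassmannian r w'.
    apply: grassmannian_tperm gr_w => //.
    by case/andP: cross => lo_j hi_i; rewrite lo_j [w i < r]ltnNge hi_i.
  have ov_w' : overlap s r w' <= p.
    by have := overlap_tperm s ji cross; rewrite -/w'; move: allowed; case: eqP => /=; lia.
  by rewrite w_eq; apply: bruhat_le_tperm ji asc' (IH _ lt_w'm gr_w' ov_w').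
move=> no_move; suff -> : w = w0 by apply: bruhat_refl.
apply: grassmannian_uniq gr_w gr_w0 _ => i; rewrite -!lowposE lo_w0.
apply: (two_block_shape s_bd le_ps le_pr (count_lowpos w le_rn)); last exact: ltn_ord.
  by rewrite -overlapE //; lia.
move=> e lt_e1 hi_e lo_e1; have lt_e : e < n by lia.
move/existsPn/(_ (Ordinal lt_e))/existsPn/(_ (Ordinal lt_e1)): no_move.
rewrite -overlapE /=; last by lia.
rewrite -[e]/(nat_of_ord (Ordinal lt_e)) -[e.+1]/(nat_of_ord (Ordinal lt_e1)) in hi_e lo_e1 *.
by rewrite !lowposE /= in hi_e lo_e1 *; lia.
Qed.

End Permutations.

Section Pairing.

Local Open Scope ring_scope.

Lemma pairing_overlap n s r (w : 'S_n) : (0 < n)%N -> (s <= n)%N -> (r <= n)%N ->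
  pairing n (wact n w (fund_weight n r)) (lambda_cw n s) =
  (overlap s r w)%:R - (r * s)%:R / n%:R.
Proof.
move=> n_gt0 le_sn le_rn; rewrite /pairing /wact /fund_weight /lambda_cw.
set al := r%:R / n%:R; set be := s%:R / n%:R.
have term (i : 'I_n) :
  ((if (w i < r)%N then 1 else 0) - al) * ((if (i < s)%N then 1 else 0) - be) =
  (((i < s) && (w i < r))%N : nat)%:R - be * ((w i < r)%N : nat)%:R
    - al * ((i < s)%N : nat)%:R + al * be.
  by case: (w i < r)%N; case: (i < s)%N; rewrite /=; ring.
rewrite (eq_bigr _ (fun i _ => term i)) !big_split /= !sumrN -!mulr_sumr sumr_const card_ord.
rewrite -!natr_sum sum_perm_ltn // sum_ord_ltn // -/(overlap s r w) -mulr_natr natrM.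
have n_neq0 : n%:R != 0 :> rat by rewrite pnatr_eq0 -lt0n.
by rewrite /al /be; field.
Qed.

Lemma wsr_condE n s r (w : 'S_n) : (0 < n)%N -> (s <= n)%N -> (r <= n)%N ->
  wsr_cond n s r w <-> (overlap s r w <= r * s %/ n)%N.
Proof.
move=> n_gt0 le_sn le_rn; rewrite /wsr_cond pairing_overlap // subr_le0.
by rewrite ler_pdivlMr ?ltr0n // -natrM ler_nat leq_divRL.
Qed.

End Pairing.

Theorem lemma5p8 (n s r : nat) :
  (1 <= s <= n - 1)%N -> (1 <= r <= n - 1)%N ->
  let p := (r * s %/ n)%N in
  let w0 : 'S_n :=
    (\prod_(p.+1 <= j < r.+1) \prod_(0 <= k < s - p) sref n (s + j - p - 1 - k))%g in
  is_min_wsr n s r w0 /\ (forall w : 'S_n, is_min_wsr n s r w -> w = w0).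
Proof.
move=> s_bd r_bd p w0.
have n_gt0 : 0 < n by lia.
have lo_p : p * n <= r * s := leq_trunc_div _ _.
have hi_p : r * s < p.+1 * n := ltn_ceil _ n_gt0.
have [le_ps le_pr le_n] : [/\ p <= s, p <= r & r + (s - p) <= n] by split; nia.
have w0E : w0 = (\prod_(p.+1 <= j < r.+1) bubble n j.-1 (s - p))%g.
  by apply: eq_big_nat => j j_bd; apply: eq_big_nat => k _; congr sref; lia.
have [gr_w0 lo_w0] := bubbles_lowpos le_n le_pr; rewrite -w0E in gr_w0 lo_w0.
have {}lo_w0 x : lowpos r w0 x = (x < p) || (s <= x < s + r - p) by rewrite lo_w0; lia.
have condE w : wsr_cond n s r w <-> overlap s r w <= p by apply: wsr_condE; lia.
have ov_w0 : overlap s r w0 <= p.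
  rewrite -[p in _ <= p](@sum_ord_ltn p n) /overlap; last by lia.
  by apply: leq_sum => i _; rewrite -lowposE lo_w0; lia.
have ge_w0 := @grassmannian_bruhat_ge n s r p w0 ltac:(lia) le_ps le_pr ltac:(lia) gr_w0 lo_w0.
split.
  split; first exact/min_coset_repP.
  split=> [|v /min_coset_repP gr_v /condE ov_v le_v_w0]; first exact/condE.
  exact: bruhat_anti le_v_w0 (ge_w0 v gr_v ov_v).
move=> w [/min_coset_repP gr_w [/condE ov_w min_w]].
by apply/esym/min_w; [exact/min_coset_repP | exact/condE | exact: ge_w0].
Qed.
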